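(* Let $k$ be a number field with ring of integers $\mathcal{O}_k$, $\mathcal{A}$ a quaternion algebra over $k$, $\mathcal{O}\subset\mathcal{A}$ an order, and $I\subset\mathcal{O}_k$ an ideal. For any $\gamma\in\mathcal{O}^1(I)$ we have $\mathrm{tr}(\gamma)\equiv 2 \pmod{I^2}$.
   Context: $\mathrm{tr}$ denotes the reduced trace of $\mathcal{A}$, $\mathcal{O}^1$ the group of elements of $\mathcal{O}$ of reduced norm one, $I\mathcal{O}=\{\sum_j t_jw_j: t_j\in I,\ w_j\in\mathcal{O}\}$, and $\mathcal{O}^1(I)=\{\gamma\in\mathcal{O}^1:\gamma-1\in I\mathcal{O}\}$. *)

From HB Require Import structures.
From mathcomp Require Import all_boot all_order all_algebra all_field.
Set Implicit Arguments. Unset Strict Implicit. Unset Printing Implicit Defensive.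
Import GRing.Theory.
Local Open Scope ring_scope.

(* A number field is modelled as a finite-dimensional field extension
   [k : fieldExtType rat] of Q. *)

(* Ring of integers O_k: elements of k integral over Z. *)
Definition integral (k : fieldExtType rat) (x : k) : Prop :=
  exists p : {poly int}, p \is monic /\ root (map_poly (fun z : int => z%:~R) p) x.

(* Ideals of O_k, as subsets of k. *)
Definition is_ideal (k : fieldExtType rat) (I : k -> Prop) : Prop :=
  [/\ forall x, I x -> integral x,
      I 0,
      forall x y, I x -> I y -> I (x + y)
    & forall r x, integral r -> I x -> I (r * x)].

Definition ideal_sq (k : fieldExtType rat) (I : k -> Prop) (x : k) : Prop :=
  exists (n : nat) (s t : 'I_n -> k),
    (forall i, I (s i)) /\ (forall i, I (t i)) /\ x = \sum_(i < n) s i * t i.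

(* The quaternion algebra (a,b)_k with basis 1, i, j, ij, i^2 = a, j^2 = b,
   ij = -ji. Elements are coordinate rows (x0,x1,x2,x3). *)
Definition quat (k : fieldExtType rat) := 'rV[k]_4.

Definition qc (k : fieldExtType rat) (x : quat k) (n : nat) : k := x ord0 (inord n).

Definition qmul (k : fieldExtType rat) (a b : k) (x y : quat k) : quat k :=
  let x0 := qc x 0 in let x1 := qc x 1 in let x2 := qc x 2 in let x3 := qc x 3 in
  let y0 := qc y 0 in let y1 := qc y 1 in let y2 := qc y 2 in let y3 := qc y 3 in
  \row_(i < 4) [:: x0 * y0 + a * x1 * y1 + b * x2 * y2 - a * b * x3 * y3;
                   x0 * y1 + x1 * y0 - b * x2 * y3 + b * x3 * y2;
                   x0 * y2 + x2 * y0 + a * x1 * y3 - a * x3 * y1;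
                   x0 * y3 + x3 * y0 + x1 * y2 - x2 * y1]`_i.

Definition qone (k : fieldExtType rat) : quat k := \row_(i < 4) (if i == 0 :> nat then 1 else 0).

Definition qtr (k : fieldExtType rat) (x : quat k) : k := 2 * qc x 0.
Definition qnrd (k : fieldExtType rat) (a b : k) (x : quat k) : k :=
  qc x 0 ^+ 2 - a * qc x 1 ^+ 2 - b * qc x 2 ^+ 2 + a * b * qc x 3 ^+ 2.

(* An O_k-order in (a,b)_k: a subring with 1 which is a finitely generated
   O_k-module spanning the algebra over k (a complete O_k-lattice). *)
Definition is_order (k : fieldExtType rat) (a b : k) (O : quat k -> Prop) : Prop :=
  O (qone k) /\
  (forall x y, O x -> O y -> O (x + y)) /\
  (forall x, O x -> O (- x)) /\
  (forall x y, O x -> O y -> O (qmul a b x y)) /\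
  (forall r x, integral r -> O x -> O (r *: x)) /\
  (exists s : seq (quat k), forall x, O x <->
     exists c : 'I_(size s) -> k, (forall i, integral (c i)) /\
                                  x = \sum_(i < size s) c i *: s`_i) /\
  (exists s : seq (quat k), (forall i, (i < size s)%N -> O s`_i) /\
     forall x : quat k, exists c : 'I_(size s) -> k,
                                  x = \sum_(i < size s) c i *: s`_i).

Definition ideal_order (k : fieldExtType rat) (I : k -> Prop) (O : quat k -> Prop)
  (x : quat k) : Prop :=
  exists (n : nat) (t : 'I_n -> k) (w : 'I_n -> quat k),
    (forall j, I (t j)) /\ (forall j, O (w j)) /\ x = \sum_(j < n) t j *: w j.

Definition O1I (k : fieldExtType rat) (a b : k) (O : quat k -> Prop) (I : k -> Prop)
  (g : quat k) : Prop :=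
  [/\ O g, qnrd a b g = 1 & ideal_order I O (g - qone k)].

(* Since nrd g = 1, tr g - 2 = - nrd (g - 1), and g - 1 = sum_j t_j w_j with
   t_j in I and w_j in O. The reduced norm is a quadratic form,
   nrd (x + y) = nrd x + nrd y + <x, y>, and both nrd and its polar form <., .>
   take integral values on O; hence nrd (sum_j t_j w_j) lies in I^2.
   Integrality of nrd on O: left multiplication by w in O has an integral
   matrix on a finite generating set of O containing 1, so its characteristic
   polynomial chi is monic, integral, and annihilates w. Writing w = w0 + v with
   v pure, v^2 = c is a scalar and k[w] is a quotient of k[sqrt c]; there both
   w0 + sqrt c and its conjugate are roots of chi, hence integral over Z, and
   so is their product nrd w. *)

From HB Require Import structures.
From mathcomp Require Import all_boot all_order all_algebra all_field.
From mathcomp Require Import boolp ring.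

Set Implicit Arguments.
Unset Strict Implicit.
Unset Printing Implicit Defensive.

Import GRing.Theory.
Local Open Scope ring_scope.

(* Integrality over Z, reflected classically into bool so that the subring
   machinery of MathComp (rpred, polyOver, mxOver) applies to it. *)
Definition Zint (R : nzRingType) : {pred R} :=
  fun x => `[< integralOver (intr : int -> R) x >].
Arguments Zint : clear implicits.

Lemma ZintP (R : nzRingType) (x : R) :
  reflect (integralOver intr x) (x \in Zint R).
Proof. exact: asboolP. Qed.

Fact Zint_subring_closed (R : comNzRingType) : subring_closed (Zint R).
Proof.
split; first exact/ZintP/integral1.
  by move=> x y /ZintP Zx /ZintP Zy; apply/ZintP/integral_sub.
by move=> x y /ZintP Zx /ZintP Zy; apply/ZintP/integral_mul.
Qed.

HB.instance Definition _ (R : comNzRingType) :=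
  GRing.isSubringClosed.Build R (Zint R) (Zint_subring_closed R).

Lemma integralE (k : fieldExtType rat) (x : k) : integral x <-> x \in Zint k.
Proof.
by split=> [[p [mp rp]]|/ZintP[p mp rp]]; [apply/ZintP; exists p|exists p].
Qed.

Lemma Zint_inj_rmorph (R S : comNzRingType) (f : {rmorphism R -> S}) :
  injective f -> forall x, (f x \in Zint S) = (x \in Zint R).
Proof.
move=> inj_f x.
have intr_f : f \o intr =1 intr by move=> z /=; rewrite rmorph_int.
apply/ZintP/ZintP => [[p mp pfx]|/(integral_rmorph f)[p mp pfx]]; exists p => //.
  move: pfx; rewrite -(eq_map_poly intr_f) map_poly_comp /root horner_map.
  by rewrite -(rmorph0 f) => /eqP/inj_f ->.
by rewrite -(eq_map_poly intr_f).
Qed.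

Lemma Zint_root_monic (R : comNzRingType) (p : {poly R}) (x : R) :
  p \is monic -> p \is a polyOver (Zint R) -> root p x -> x \in Zint R.
Proof.
move=> mp /polyOverP Zp px; apply/ZintP/(integral_root_monic mp px).
by apply/integral_poly => i; apply/ZintP.
Qed.

Lemma char_poly_Zint (R : comNzRingType) n (M : 'M[R]_n) :
  M \is a mxOver (Zint R) -> char_poly M \is a polyOver (Zint R).
Proof.
move=> /mxOverP ZM; rewrite rpred_sum // => s _.
rewrite rpredM ?rpredX ?rpredN ?rpred1 ?rpred_prod // => i _.
by rewrite !mxE rpredB ?rpredMn ?polyOverX ?polyOverC.
Qed.

Lemma horner_mx_intertwine (R : comNzRingType) m n (S : 'M[R]_(m.+1, n.+1))
    (A : 'M_n.+1) (M : 'M_m.+1) (q : {poly R}) :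
  S *m A = M *m S -> S *m horner_mx A q = horner_mx M q *m S.
Proof.
move=> SA_MS; elim/poly_ind: q => [|q e IH].
  by rewrite !rmorph0 mulmx0 mul0mx.
rewrite !rmorphD !rmorphM /= !horner_mx_X !horner_mx_C -!mulmxE.
rewrite mulmxDr mulmxDl mulmxA IH -[_ *m S *m A]mulmxA SA_MS !mulmxA.
by rewrite mul_mx_scalar mul_scalar_mx.
Qed.

Lemma big_ord4 (V : nmodType) (F : 'I_4 -> V) :
  \sum_(i < 4) F i = F (inord 0) + F (inord 1) + F (inord 2) + F (inord 3).
Proof.
rewrite !big_ord_recl big_ord0 addr0 !addrA.
by congr (_ + _ + _ + _); congr F; apply: val_inj; rewrite /= inordK.
Qed.

(* (x, y) stands for x + y sqrt c in R[sqrt c] = R[X]/(X^2 - c). *)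
Definition sqext {R : comNzRingType} (c : R) := (R * R)%type.

Section SqrtExtension.
Variables (R : comNzRingType) (c : R).
Local Notation Rc := (sqext c).

HB.instance Definition _ := GRing.Zmodule.on Rc.

Definition sqext_mul (x y : Rc) : Rc :=
  (x.1 * y.1 + c * (x.2 * y.2), x.1 * y.2 + x.2 * y.1).

Definition sqext_one : Rc := (1, 0).

Fact sqext_mulA : associative sqext_mul.
Proof. by move=> x y z; congr pair => /=; ring. Qed.

Fact sqext_mulC : commutative sqext_mul.
Proof. by move=> x y; congr pair => /=; ring. Qed.

Fact sqext_mul1 : left_id sqext_one sqext_mul.
Proof. by move=> [x1 x2]; congr pair => /=; ring. Qed.

Fact sqext_mulDl : left_distributive sqext_mul +%R.
Proof. by move=> x y z; congr pair => /=; ring. Qed.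

Fact sqext_one_neq0 : sqext_one != 0.
Proof. by apply/eqP => /(congr1 fst)/eqP; rewrite oner_eq0. Qed.

HB.instance Definition _ := GRing.Zmodule_isComNzRing.Build Rc
  sqext_mulA sqext_mulC sqext_mul1 sqext_mulDl sqext_one_neq0.

Lemma sqext_mulE (x y : Rc) :
  x * y = (x.1 * y.1 + c * (x.2 * y.2), x.1 * y.2 + x.2 * y.1).
Proof. by []. Qed.

Definition sqextC (x : R) : Rc := (x, 0).

Fact sqextC_is_zmod_morphism : zmod_morphism sqextC.
Proof. by move=> x y; congr pair => /=; rewrite subr0. Qed.

HB.instance Definition _ :=
  GRing.isZmodMorphism.Build R Rc sqextC sqextC_is_zmod_morphism.

Fact sqextC_is_monoid_morphism : monoid_morphism sqextC.
Proof. by split=> // x y; congr pair => /=; ring. Qed.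

HB.instance Definition _ :=
  GRing.isMonoidMorphism.Build R Rc sqextC sqextC_is_monoid_morphism.

Lemma sqextC_inj : injective sqextC.
Proof. by move=> x y [->]. Qed.

Definition sqext_conj (x : Rc) : Rc := (x.1, - x.2).

Fact sqext_conj_is_zmod_morphism : zmod_morphism sqext_conj.
Proof. by move=> x y; congr pair => /=; ring. Qed.

HB.instance Definition _ :=
  GRing.isZmodMorphism.Build Rc Rc sqext_conj sqext_conj_is_zmod_morphism.

Fact sqext_conj_is_monoid_morphism : monoid_morphism sqext_conj.
Proof. by split=> [|x y]; congr pair => /=; ring. Qed.

HB.instance Definition _ :=
  GRing.isMonoidMorphism.Build Rc Rc sqext_conj sqext_conj_is_monoid_morphism.

Lemma sqext_conjC x : sqext_conj (sqextC x) = sqextC x.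
Proof. by rewrite /sqext_conj /= oppr0. Qed.

Lemma sqext_mul_conj (u : Rc) :
  u * sqext_conj u = sqextC (u.1 ^+ 2 - c * u.2 ^+ 2).
Proof. by rewrite sqext_mulE; congr pair => /=; ring. Qed.

Lemma sqext_norm_Zint (q : {poly R}) (u : Rc) :
  q \is monic -> q \is a polyOver (Zint R) -> root (map_poly sqextC q) u ->
  u.1 ^+ 2 - c * u.2 ^+ 2 \in Zint R.
Proof.
move=> mq /polyOverP Zq qu.
have mqC : map_poly sqextC q \is monic := monic_map sqextC mq.
have ZqC : map_poly sqextC q \is a polyOver (Zint Rc).
  by apply/polyOverP => i; rewrite coef_map Zint_inj_rmorph //; apply: sqextC_inj.
have qu' : root (map_poly sqextC q) (sqext_conj u).
  rewrite -(eq_map_poly sqext_conjC) map_poly_comp /root horner_map.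
  by rewrite (eqP qu) rmorph0.
have := rpredM (Zint_root_monic mqC ZqC qu) (Zint_root_monic mqC ZqC qu').
by rewrite sqext_mul_conj Zint_inj_rmorph //; apply: sqextC_inj.
Qed.

End SqrtExtension.

Arguments sqextC {R c}.
Arguments sqext_conj {R c}.

Section Quaternions.
Variables (k : fieldExtType rat) (a b : k).
Implicit Types (x y w : quat k) (t : k).

Lemma qcD x y n : qc (x + y) n = qc x n + qc y n.
Proof. by rewrite /qc mxE. Qed.

Lemma qcN x n : qc (- x) n = - qc x n.
Proof. by rewrite /qc mxE. Qed.

Lemma qcZ t x n : qc (t *: x) n = t * qc x n.
Proof. by rewrite /qc mxE. Qed.

Lemma qc0 n : qc (0 : quat k) n = 0.
Proof. by rewrite /qc mxE. Qed.

Lemma qc_qone n : (n < 4)%N -> qc (qone k) n = (n == 0)%:R.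
Proof. by move=> n_lt4; rewrite /qc mxE inordK //; case: eqP. Qed.

Lemma qc_qmul x y n : (n < 4)%N -> qc (qmul a b x y) n =
  [:: qc x 0 * qc y 0 + a * qc x 1 * qc y 1 + b * qc x 2 * qc y 2
        - a * b * qc x 3 * qc y 3;
      qc x 0 * qc y 1 + qc x 1 * qc y 0 - b * qc x 2 * qc y 3 + b * qc x 3 * qc y 2;
      qc x 0 * qc y 2 + qc x 2 * qc y 0 + a * qc x 1 * qc y 3 - a * qc x 3 * qc y 1;
      qc x 0 * qc y 3 + qc x 3 * qc y 0 + qc x 1 * qc y 2 - qc x 2 * qc y 1]`_n.
Proof. by move=> n_lt4; rewrite {1}/qc mxE inordK. Qed.

Lemma quatP x y : (forall n, (n < 4)%N -> qc x n = qc y n) -> x = y.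
Proof.
move=> eq_xy; apply/rowP => i; have := eq_xy i (ltn_ord i).
by rewrite /qc inord_val (ord1 ord0).
Qed.

Definition qbasis (m : nat) : quat k := delta_mx 0 (inord m).

Lemma qc_qbasis m n : (m < 4)%N -> (n < 4)%N -> qc (qbasis m) n = (n == m)%:R.
Proof. by move=> m_lt4 n_lt4; rewrite /qc mxE eqxx -val_eqE /= !inordK. Qed.

Definition lmulmx w : 'M[k]_4 :=
  \matrix_(i < 4, j < 4) qc (qmul a b w (qbasis i)) j.

Lemma mul_lmulmx x w : x *m lmulmx w = qmul a b w x.
Proof.
apply: quatP => n n_lt4; rewrite {1}/qc mxE big_ord4 !mxE !inordK //.
rewrite -/(qc x 0) -/(qc x 1) -/(qc x 2) -/(qc x 3).
case: n n_lt4 => [|[|[|[|n]]]] // _; rewrite !qc_qmul //= !qc_qbasis //=; ring.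
Qed.

Definition qpure w := w - qc w 0 *: qone k.

Lemma qc_qpure w n : (n < 4)%N -> qc (qpure w) n = if n == 0 then 0 else qc w n.
Proof.
by move=> n_lt4; rewrite qcD qcN qcZ qc_qone //; case: eqP => [->|_] /=; ring.
Qed.

Definition qpure_sq w := qc w 0 ^+ 2 - qnrd a b w.

(* qpure w squares to qpure_sq w, so qembed maps k[sqrt c], c = qpure_sq w,
   onto k[w], sending sqrt c to qpure w. *)
Definition qembed w (z : sqext (qpure_sq w)) : quat k :=
  z.1 *: qone k + z.2 *: qpure w.

Lemma qembed_eq0 w (z : sqext (qpure_sq w)) :
  qpure w != 0 -> qembed z = 0 -> z = 0.
Proof.
move=> pure_neq0 /[dup] /(congr1 (fun x => qc x 0)).
rewrite qcD !qcZ qc_qone // qc_qpure // qc0 mulr1 mulr0 addr0 => z1_eq0.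
rewrite /qembed z1_eq0 scale0r add0r => /eqP.
rewrite scaler_eq0 (negbTE pure_neq0) orbF => /eqP.
by case: z z1_eq0 => ? ? /= -> ->.
Qed.

Lemma qpure_eq0_qc w n : qpure w = 0 -> (0 < n < 4)%N -> qc w n = 0.
Proof.
move=> /(congr1 (fun x => qc x n)) + /andP[n_gt0 n_lt4].
by rewrite qc_qpure // qc0; case: n n_gt0 {n_lt4}.
Qed.

Lemma qembedD w (z z' : sqext (qpure_sq w)) :
  qembed (z + z') = qembed z + qembed z'.
Proof. by rewrite /qembed !scalerDl addrACA. Qed.

Lemma qembedC w t : qembed (sqextC (c := qpure_sq w) t) = t *: qone k.
Proof. by rewrite /qembed scale0r addr0. Qed.

(* w corresponds to (w0, 1) = w0 + sqrt c; when qpure w = 0 it also corresponds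
   to (w0, 0), which is used then since qembed is no longer injective. *)
Lemma qembedM w beta (z : sqext (qpure_sq w)) : beta = 1 \/ qpure w = 0 ->
  qembed (z * (qc w 0, beta)) = qmul a b w (qembed z).
Proof.
move=> beta_pure; case: z => z1 z2.
apply: quatP => n n_lt4; rewrite /qembed sqext_mulE /= /qpure_sq /qnrd.
case: n n_lt4 => [|[|[|[|n]]]] // _;
  rewrite !(qcD, qcZ, qc_qmul, qc_qone, qc_qpure) //=;
  case: beta_pure => [->|pure0];
  rewrite ?(qpure_eq0_qc (n := 1) pure0) ?(qpure_eq0_qc (n := 2) pure0)
          ?(qpure_eq0_qc (n := 3) pure0) //; ring.
Qed.

Lemma horner_lmulmx w beta (q : {poly k}) : beta = 1 \/ qpure w = 0 ->
  qone k *m horner_mx (lmulmx w) q =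
  qembed ((map_poly sqextC q).[(qc w 0, beta) : sqext (qpure_sq w)]).
Proof.
move=> beta_pure; elim/poly_ind: q => [|q e IH].
  by rewrite !rmorph0 mulmx0 horner0 /qembed !scale0r addr0.
rewrite !rmorphD !rmorphM /= !horner_mx_X !horner_mx_C -!mulmxE.
rewrite map_polyX map_polyC hornerD hornerMX hornerC qembedD qembedC qembedM //.
by rewrite mulmxDr mulmxA IH mul_lmulmx mul_mx_scalar.
Qed.

Lemma qnrdZ t x : qnrd a b (t *: x) = t ^+ 2 * qnrd a b x.
Proof. by rewrite /qnrd !qcZ; ring. Qed.

Lemma qnrd_qone : qnrd a b (qone k) = 1.
Proof. by rewrite /qnrd !qc_qone //=; ring. Qed.

Lemma qnrd0 : qnrd a b 0 = 0.
Proof. by rewrite /qnrd !qc0; ring. Qed.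

Lemma qnrd_sub_qone x : qnrd a b (x - qone k) = qnrd a b x - qtr x + 1.
Proof. by rewrite /qnrd /qtr !(qcD, qcN, qc_qone) //=; ring. Qed.

Definition qpolar x y := qnrd a b (x + y) - qnrd a b x - qnrd a b y.

Lemma qnrdD x y : qnrd a b (x + y) = qnrd a b x + qnrd a b y + qpolar x y.
Proof. by rewrite /qpolar; ring. Qed.

Lemma qpolar0l y : qpolar 0 y = 0.
Proof. by rewrite /qpolar add0r qnrd0; ring. Qed.

Lemma qpolarDl x y w : qpolar (x + y) w = qpolar x w + qpolar y w.
Proof. by rewrite /qpolar /qnrd !qcD; ring. Qed.

Lemma qpolarZl t x y : qpolar (t *: x) y = t * qpolar x y.
Proof. by rewrite /qpolar /qnrd !(qcD, qcZ); ring. Qed.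

Lemma qpolarZr t x y : qpolar x (t *: y) = t * qpolar x y.
Proof. by rewrite /qpolar /qnrd !(qcD, qcZ); ring. Qed.

Lemma qnrd_Zint_of_root w (q : {poly k}) :
    q \is monic -> q \is a polyOver (Zint k) ->
    qone k *m horner_mx (lmulmx w) q = 0 ->
  qnrd a b w \in Zint k.
Proof.
move=> mq Zq qw0; have [pure0 | pure_neq0] := eqVneq (qpure w) 0.
  have q_w0 : root q (qc w 0).
    have := horner_lmulmx (beta := 0) q (or_intror pure0).
    rewrite qw0 -[(qc w 0, 0)]/(sqextC (c := qpure_sq w) (qc w 0)).
    rewrite horner_map qembedC => /(congr1 (fun x => qc x 0)).
    by rewrite qc0 qcZ qc_qone // mulr1 => /esym/eqP.
  have w_scalar : w = qc w 0 *: qone k.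
    by apply/eqP; rewrite -subr_eq0 -/(qpure w) pure0.
  rewrite w_scalar qnrdZ qnrd_qone mulr1 rpredX //.
  exact: Zint_root_monic mq Zq q_w0.
have := horner_lmulmx (w := w) (beta := 1) q (or_introl erefl).
rewrite qw0 => /esym/(qembed_eq0 pure_neq0)/eqP/(sqext_norm_Zint mq Zq).
by rewrite /= /qpure_sq expr1n mulr1 opprB addrC subrK.
Qed.

End Quaternions.

Section Orders.
Variables (k : fieldExtType rat) (a b : k) (O : quat k -> Prop).
Hypothesis O_order : is_order a b O.

Lemma order_lmulmx_integral w : O w ->
  exists q : {poly k}, [/\ q \is monic, q \is a polyOver (Zint k)
                        & qone k *m horner_mx (lmulmx a b w) q = 0].
Proof.
case: O_order => O1 [_ [_ [Omul [_ [[s Os] _]]]]] Ow.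
(* Prepending qone gives a nonempty generating family with qone as row 0. *)
pose g (i : 'I_(size s).+1) := (qone k :: s)`_i.
have Og i : O (g i).
  case: (unliftP ord0 i) => [j ->|->] //=; apply/Os.
  exists (fun l => (l == j)%:R); split.
    by move=> l; apply/integralE/rpred_nat.
  rewrite (bigD1 j) //= eqxx scale1r big1 ?addr0 // => l /negbTE->.
  by rewrite scale0r.
have g_span x : O x -> exists cf : 'I_(size s).+1 -> k,
    (forall i, cf i \in Zint k) /\ x = \sum_i cf i *: g i.
  move=> /Os [cf [Zcf ->]].
  exists (fun i => if unlift ord0 i is Some j then cf j else 0); split.
    move=> i; case: (unlift ord0 i) => [j|]; last exact: rpred0.
    exact/integralE.
  rewrite big_ord_recl unlift_none scale0r add0r.
  by apply: eq_bigr => j _; rewrite liftK.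
have /fin_all_exists[cf cfP] i := g_span _ (Omul _ _ Ow (Og i)).
pose M := \matrix_(i, j) cf i j; pose S := \matrix_i g i.
have SM : S *m lmulmx a b w = M *m S.
  apply/row_matrixP => i; rewrite !row_mul rowK mul_lmulmx (proj2 (cfP i)).
  by rewrite mulmx_sum_row; apply: eq_bigr => j _; rewrite !mxE rowK.
exists (char_poly M); split; first exact: char_poly_monic.
  by apply/char_poly_Zint/mxOverP => i j; rewrite mxE (proj1 (cfP i)).
have -> : qone k = row 0 S by rewrite rowK.
by rewrite -row_mul (horner_mx_intertwine _ SM) Cayley_Hamilton mul0mx row0.
Qed.

Lemma order_qnrd_Zint w : O w -> qnrd a b w \in Zint k.
Proof.
by case/order_lmulmx_integral=> q [mq Zq qw0]; apply: qnrd_Zint_of_root mq Zq qw0.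
Qed.

Lemma order_qpolar_Zint x y : O x -> O y -> qpolar a b x y \in Zint k.
Proof.
case: (O_order) => _ [Oadd _] Ox Oy.
by rewrite /qpolar !rpredB ?order_qnrd_Zint //; apply: Oadd.
Qed.

End Orders.

Section Ideals.
Variables (k : fieldExtType rat) (I : k -> Prop).
Hypothesis I_ideal : is_ideal I.

Lemma ideal0 : I 0.
Proof. by case: I_ideal. Qed.

Lemma idealD x y : I x -> I y -> I (x + y).
Proof. by case: I_ideal => _ _ + _; apply. Qed.

Lemma idealMr x r : I x -> r \in Zint k -> I (x * r).
Proof. by case: I_ideal => _ _ _ + Ix /integralE Zr; rewrite mulrC; apply. Qed.

Lemma idealN x : I x -> I (- x).
Proof. by rewrite -mulrN1 => Ix; apply: idealMr; rewrite ?rpredN1. Qed.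

Lemma ideal_sqM s t : I s -> I t -> ideal_sq I (s * t).
Proof. by move=> Is It; exists 1%N, (fun=> s), (fun=> t); rewrite big_ord1. Qed.

Lemma ideal_sqD x y : ideal_sq I x -> ideal_sq I y -> ideal_sq I (x + y).
Proof.
move=> [m [s [t [Is [It ->]]]]] [n [s' [t' [Is' [It' ->]]]]].
pose glue (f : 'I_m -> k) (f' : 'I_n -> k) i :=
  match split i with inl j => f j | inr j => f' j end.
exists (m + n)%N, (glue s s'), (glue t t'); split; [|split].
- by move=> i; rewrite /glue; case: (split i).
- by move=> i; rewrite /glue; case: (split i).
- rewrite big_split_ord; congr (_ + _); apply: eq_big => // i _;
    by rewrite /glue ?(unsplitK (inl i)) ?(unsplitK (inr i)).
Qed.

Lemma ideal_sqN x : ideal_sq I x -> ideal_sq I (- x).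
Proof.
move=> [n [s [t [Is [It ->]]]]]; exists n, (fun i => - s i), t.
split; [|split] => //.
- by move=> i; apply: idealN.
- by rewrite -sumrN; apply: eq_bigr => i _; rewrite mulNr.
Qed.

End Ideals.

Lemma ideal_order_ind (k : fieldExtType rat) (I : k -> Prop) (O : quat k -> Prop)
    (P : quat k -> Prop) :
  P 0 ->
  (forall y t w, ideal_order I O y -> I t -> O w -> P y -> P (y + t *: w)) ->
  forall x, ideal_order I O x -> P x.
Proof.
move=> P0 PD _ [n [t [w [It [Ow ->]]]]].
elim: n t w It Ow => [|n IH] t w It Ow; first by rewrite big_ord0.
rewrite big_ord_recr /=; apply: PD => //; last exact: IH.
pose widen := widen_ord (leqnSn n).
by exists n, (fun j => t (widen j)), (fun j => w (widen j)).
Qed.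

Section IdealOrders.
Variables (k : fieldExtType rat) (a b : k) (O : quat k -> Prop) (I : k -> Prop).
Hypotheses (O_order : is_order a b O) (I_ideal : is_ideal I).

Lemma qpolar_ideal_order y w : ideal_order I O y -> O w -> I (qpolar a b y w).
Proof.
move=> Iy Ow; elim/ideal_order_ind: y / Iy => [|y t w' _ It Ow' IHy].
  by rewrite qpolar0l; apply: ideal0.
rewrite qpolarDl qpolarZl; apply: idealD => //.
exact: (idealMr I_ideal It (order_qpolar_Zint O_order Ow' Ow)).
Qed.

Lemma qnrd_ideal_order x : ideal_order I O x -> ideal_sq I (qnrd a b x).
Proof.
elim/ideal_order_ind: x / => [|y t w Iy It Ow IHy].
  by rewrite qnrd0 -(mulr0 0); apply: ideal_sqM; apply: ideal0.
rewrite qnrdD qnrdZ qpolarZr expr2 -mulrA.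
apply: ideal_sqD; first apply: ideal_sqD.
- exact: IHy.
- exact: (ideal_sqM It (idealMr I_ideal It (order_qnrd_Zint O_order Ow))).
- exact: (ideal_sqM It (qpolar_ideal_order Iy Ow)).
Qed.

End IdealOrders.

Theorem lemma7p2 (k : fieldExtType rat) (a b : k) (ha : a != 0) (hb : b != 0)
  (O : quat k -> Prop) (hO : is_order a b O)
  (I : k -> Prop) (hI : is_ideal I)
  (g : quat k) (hg : O1I a b O I g) :
  ideal_sq I (qtr g - 2).
Proof.
case: hg => _ g_nrd g_ideal.
have -> : qtr g - 2 = - qnrd a b (g - qone k).
  by rewrite qnrd_sub_qone g_nrd; ring.
exact: (ideal_sqN hI (qnrd_ideal_order hO hI g_ideal)).
Qed.
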